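(* Let $\tau$ be an infinite cardinal and let $\mathcal U$ be a uniformity on a space $X$ with $w(\mathcal U)\le\tau$. There is no continuous and effective action on $X$ of a topological group $G$ with $\psi(G)>\tau$ for which $\mathcal U$ is an equiuniformity on $X$.
   Context: All spaces are Tychonoff. Uniformities are families of open covers; $w(\mathcal U)$ is the least cardinality of a base. For a continuous action of $G$ on $X$, $\mathcal U$ is an equiuniformity if it is saturated ($gu\in\mathcal U$ for $g\in G,u\in\mathcal U$) and bounded (for each $u\in\mathcal U$ there exist a neighborhood $O$ of the unit and $v\in\mathcal U$ with $\{OV:V\in v\}$ refining $u$). An action is effective if only the unit fixes every point. $\psi(G)$ is the pseudocharacter of $G$. *)

From mathcomp Require Import all_boot all_algebra.
From mathcomp Require Import all_classical all_reals all_analysis.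

Set Implicit Arguments.
Unset Strict Implicit.
Unset Printing Implicit Defensive.

Local Open Scope classical_set_scope.
Local Open Scope card_scope.

Definition tychonoff_space (X : topologicalType) : Prop :=
  completely_regular_space X /\ hausdorff_space X.

Definition open_cover (X : topologicalType) (u : set (set X)) : Prop :=
  (forall V, u V -> open V) /\ \bigcup_(V in u) V = setT.

Definition refines (X : Type) (u v : set (set X)) : Prop :=
  forall A, u A -> exists2 B, v B & A `<=` B.

Definition star (X : Type) (A : set X) (u : set (set X)) : set X :=
  \bigcup_(V in [set V | u V /\ V `&` A !=set0]) V.

Definition star_refines (X : Type) (u v : set (set X)) : Prop :=
  refines ((fun V => star V u) @` u) v.

Definition uniformity (X : topologicalType) (U : set (set (set X))) : Prop :=
  U !=set0 /\
  [/\ (forall u, U u -> open_cover u),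
      (forall u v, U u -> open_cover v -> refines u v -> U v),
      (forall u v, U u -> U v -> exists w, (U w /\ refines w u /\ refines w v)),
      (forall u, U u -> exists2 v, U v & star_refines v u) &
      (* compatibility with the topology of X *)
      (forall (x : X) (O : set X), open O -> O x ->
          exists2 u, U u & star [set x] u `<=` O)].

Definition uniformity_base (X : Type) (U B : set (set (set X))) : Prop :=
  B `<=` U /\ forall u, U u -> exists2 b, B b & refines b u.

Definition weight_le (X : Type) (U : set (set (set X))) (T : Type) : Prop :=
  exists2 B, uniformity_base U B & B #<= [set: T].

Definition is_topological_group (G : topologicalType)
    (mul : G -> G -> G) (inv : G -> G) (one : G) : Prop :=
  [/\ (forall a b c, mul a (mul b c) = mul (mul a b) c),
      (forall a, mul one a = a),
      (forall a, mul (inv a) a = one),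
      continuous (fun p : G * G => mul p.1 p.2) &
      continuous inv].

Definition pseudocharacter_le (G : topologicalType) (T : Type) : Prop :=
  forall x : G, exists F : set (set G),
    [/\ F #<= [set: T], (forall A, F A -> open A) & \bigcap_(A in F) A = [set x]].

Definition pseudocharacter_gt (G : topologicalType) (T : Type) : Prop :=
  ~ pseudocharacter_le G T.

Definition is_action (G X : Type) (mul : G -> G -> G) (one : G)
    (act : G -> X -> X) : Prop :=
  (forall x, act one x = x) /\ (forall g h x, act (mul g h) x = act g (act h x)).

Definition continuous_action (G X : topologicalType) (act : G -> X -> X) : Prop :=
  continuous (fun p : G * X => act p.1 p.2).

Definition effective_action (G X : Type) (one : G) (act : G -> X -> X) : Prop :=
  forall g, (forall x, act g x = x) -> g = one.

Definition act_set (G X : Type) (act : G -> X -> X) (O : set G) (V : set X) : set X :=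
  [set z | exists g y, [/\ O g, V y & z = act g y]].

Definition saturated (G X : Type) (act : G -> X -> X) (U : set (set (set X))) : Prop :=
  forall g u, U u -> U ((fun V => act g @` V) @` u).

Definition bounded (G X : topologicalType) (one : G) (act : G -> X -> X)
    (U : set (set (set X))) : Prop :=
  forall u, U u -> exists O, exists v,
    [/\ nbhs one O, U v & refines ((fun V => act_set act O V) @` v) u].

Definition equiuniformity (G X : topologicalType) (one : G) (act : G -> X -> X)
    (U : set (set (set X))) : Prop :=
  uniformity U /\ saturated act U /\ bounded one act U.

From mathcomp Require Import all_boot all_algebra.
From mathcomp Require Import all_classical all_reals all_analysis.

(* Boundedness of the action gives, for each cover b of a base of U, a
   neighbourhood N_b of the unit with g x in st(x, b) whenever g is in N_b.
   If g lies in every N_b, then g x lies in every star of x; these stars form a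
   neighbourhood base at x, so g x = x as X is Hausdorff, and g is the unit by
   effectiveness.  Hence the interiors of the N_b, at most tau many, cut out
   the unit, and by homogeneity psi(G) <= tau. *)

Set Implicit Arguments.
Unset Strict Implicit.

Local Open Scope classical_set_scope.

Section TopologicalGroup.
Variables (G : topologicalType) (mul : G -> G -> G) (inv : G -> G) (one : G).
Hypothesis hG : is_topological_group mul inv one.

Lemma tg_mulKg a b : mul (inv a) (mul a b) = b.
Proof. by have [mulA mul1g mulVg _ _] := hG; rewrite mulA mulVg mul1g. Qed.

Lemma tg_mulgV a : mul a (inv a) = one.
Proof.
have [mulA mul1g mulVg _ _] := hG.
by rewrite -[mul a _](tg_mulKg (inv a)) (mulA (inv a)) mulVg mul1g mulVg.
Qed.

Lemma tg_mulg1 a : mul a one = a.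
Proof.
have [mulA mul1g mulVg _ _] := hG.
by rewrite -(mulVg a) mulA tg_mulgV mul1g.
Qed.

Lemma tg_mulKVg a b : mul a (mul (inv a) b) = b.
Proof. by have [mulA mul1g _ _ _] := hG; rewrite mulA tg_mulgV mul1g. Qed.

Lemma open_tg_translate a (A : set G) : open A -> open (mul a @` A).
Proof.
have [_ _ _ mul_cont _] := hG.
have -> : mul a @` A = mul (inv a) @^-1` A.
  rewrite eqEsubset; split => [_ [b Ab <-]|z Az].
    by rewrite /preimage /= tg_mulKg.
  by exists (mul (inv a) z); rewrite ?tg_mulKVg.
have translate_cont : continuous (mul (inv a)).
  move=> z; apply: (@continuous_comp _ _ _ (fun z => (inv a, z))
    (fun p : G * G => mul p.1 p.2)); last exact: mul_cont.
  by apply: cvg_pair; [exact: cvg_cst | exact: cvg_id].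
by move/continuousP : translate_cont; apply.
Qed.

Lemma pseudocharacter_le_of_unit (T : Type) (F : set (set G)) :
  (F #<= [set: T])%card -> (forall A, F A -> open A) ->
  \bigcap_(A in F) A = [set one] -> pseudocharacter_le G T.
Proof.
move=> FT Fopen F1 x; exists ((fun A => mul x @` A) @` F); split.
- exact: card_le_trans (card_image_le _ _) FT.
- by move=> _ [A FA <-]; apply/open_tg_translate/Fopen.
- rewrite eqEsubset; split => [z Fz|_ -> _ [A FA <-]]; last first.
    exists one; last exact: tg_mulg1.
    by have : [set one] one by []; rewrite -F1; apply.
  have : [set one] (mul (inv x) z).
    rewrite -F1 => A FA; have [a Aa <-] := Fz _ (ex_intro2 _ _ A FA erefl).
    by rewrite tg_mulKg.
  by rewrite /set1 /= => /(congr1 (mul x)); rewrite tg_mulKVg tg_mulg1.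
Qed.

End TopologicalGroup.

Lemma hausdorff_star_base_eq (X : topologicalType) (U B : set (set (set X)))
    (x y : X) :
  hausdorff_space X -> uniformity U -> uniformity_base U B ->
  (forall b, B b -> star [set x] b y) -> y = x.
Proof.
move=> hX [_ [_ _ _ _ U_nbhs]] [_ B_ref] y_stars.
apply: hX => C A yC xA; exists y; split; first exact: nbhs_singleton.
have [u Uu /(_ y) star_sub] := U_nbhs x _ (open_interior A) xA.
apply: interior_subset; apply: star_sub.
have [b Bb b_ref] := B_ref u Uu.
have [W [bW Wx] Wy] := y_stars b Bb.
have [W' uW' WW'] := b_ref W bW.
exists W'; last exact: WW'.
by split => //; case: Wx => z [Wz xz]; exists z; split => //; exact: WW'.
Qed.

Lemma bounded_nbhs_star (G X : topologicalType) (one : G) (act : G -> X -> X)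
    (U : set (set (set X))) (u : set (set X)) :
  uniformity U -> (forall x, act one x = x) -> bounded one act U -> U u ->
  exists2 N, nbhs one N & forall g x, N g -> star [set x] u (act g x).
Proof.
move=> [_ [U_cover _ _ _ _]] act1 bnd Uu.
have [Ou [v [Ou1 Uv v_ref]]] := bnd u Uu.
exists Ou => // g x Ng.
have [_ v_cover] := U_cover _ Uv.
have : [set: X] x by [].
rewrite -v_cover => -[V vV Vx].
have [W uW OV_W] := v_ref (act_set act Ou V) (ex_intro2 _ _ V vV erefl).
exists W; last by apply: OV_W; exists g, x.
split => //; exists x; split => //.
by apply: OV_W; exists one, x; split; rewrite ?act1 //; exact: nbhs_singleton.
Qed.

Theorem corollary3p13
  (tau : Type) (htau : infinite_set [set: tau])
  (X : topologicalType) (hX : tychonoff_space X)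
  (U : set (set (set X))) (hU : uniformity U) (hw : weight_le U tau) :
  ~ exists (G : topologicalType) (mul : G -> G -> G) (inv : G -> G) (one : G)
      (act : G -> X -> X),
      [/\ tychonoff_space G /\ is_topological_group mul inv one,
          is_action mul one act /\ continuous_action act,
          effective_action one act, equiuniformity one act U &
          pseudocharacter_gt G tau].
Proof.
move=> [G [mul [inv [one [act [[_ hG] [[act1 _] _] eff [_ [_ bnd]] psi]]]]]].
apply: psi.
have [B hB Bcard] := hw; have [BU _] := hB.
have /choice [N N_star] : forall b, exists Nb : set G, B b ->
    nbhs one Nb /\ forall g x, Nb g -> star [set x] b (act g x).
  move=> b; have [Bb|nBb] := pselect (B b); last by exists setT => /nBb.
  by have [Nb] := bounded_nbhs_star hU act1 bnd (BU _ Bb); exists Nb.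
apply: (pseudocharacter_le_of_unit hG (F := (fun b => (N b)°) @` B)).
- exact: card_le_trans (card_image_le _ _) Bcard.
- by move=> _ [b _ <-]; exact: open_interior.
rewrite eqEsubset; split => [g Ng|_ -> _ [b Bb <-]].
  2: exact: (N_star b Bb).1.
apply: eff => x; apply: (hausdorff_star_base_eq hX.2 hU hB) => b Bb.
by apply: (N_star b Bb).2; apply: interior_subset; apply: Ng; exists b.
Qed.
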